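(* Assume $N\ge2$, $\mathcal{G}_u$ connected and Assumption 1. Let $A=[A_1;A_2]\in\mathbb{R}^{4EM\times NM}$ and $B=[-I_{2EM};-I_{2EM}]$, $f(x)=\sum_i f_i(x_i)$. Consider the iteration: given $x^0\in\mathbb{R}^{NM}$, set $x^0_{[Q]}=Q(x^0)$, $z_Q^0=\tfrac12M_+^Tx^0_{[Q]}$, and $\lambda_Q^0=[\beta_Q^0;\gamma_Q^0]$ with $\gamma_Q^0=-\beta_Q^0$; for $k\ge0$ let $x^{k+1}$ be the minimizer of $f(x)+(\lambda_Q^k)^T(Ax+Bz_Q^k)+\tfrac{\rho}{2}\|Ax+Bz_Q^k\|_2^2$, $x^{k+1}_{[Q]}=Q(x^{k+1})$, $z_Q^{k+1}$ the solution of $B^T\lambda_Q^k+\rho B^T(Ax^{k+1}_{[Q]}+Bz_Q^{k+1})=0$, and $\lambda_Q^{k+1}=\lambda_Q^k+\rho(Ax^{k+1}_{[Q]}+Bz_Q^{k+1})$, where $\lambda_Q^k=[\beta_Q^k;\gamma_Q^k]$ with $\beta_Q^k,\gamma_Q^k\in\mathbb{R}^{2EM}$. Then for all $k\ge0$: $\gamma_Q^k=-\beta_Q^k$, $z_Q^k=\tfrac12M_+^Tx^k_{[Q]}$, and, with $\alpha_Q^k:=M_-\beta_Q^k$, the pair $(x^k,\alpha_Q^k)$ satisfies $0\in\partial f(x^{k+1})+2\rho Wx^{k+1}+\alpha_Q^k-\rho L_+x^k_{[Q]}$ and $\alpha_Q^{k+1}=\alpha_Q^k+\rho L_-x^{k+1}_{[Q]}$;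 that is, it coincides with the QC-ADMM iteration started from $x^0$ and $\alpha_Q^0=M_-\beta_Q^0$.
   Context: Network and matrices: $\mathcal{G}_u$ is an undirected graph with vertices $\{1,\dots,N\}$ and $E$ edges; $\mathcal{N}_i$ is the neighbor set of $i$. Each edge $\{i,j\}$ gives arcs $(i,j),(j,i)$, enumerated $q=1,\dots,2E$. Fix $M\ge1$. $A_1,A_2\in\mathbb{R}^{2EM\times NM}$ consist of $2E\times N$ blocks of size $M\times M$: if arc $q$ is $(i,j)$, the $(q,i)$ block of $A_1$ and the $(q,j)$ block of $A_2$ are $I_M$, other blocks zero. $M_+=A_1^T+A_2^T$, $M_-=A_1^T-A_2^T$, $L_+=\tfrac12M_+M_+^T$, $L_-=\tfrac12M_-M_-^T$, and $W$ is block diagonal with $i$th diagonal block $|\mathcal{N}_i|I_M$. Vectors in $\mathbb{R}^{NM}$ are $x=[x_1;\dots;x_N]$, $x_i\in\mathbb{R}^M$. Assumption 1: each $f_i:\mathbb{R}^M\to\mathbb{R}\cup\{\infty\}$ is proper, closed and convex, has a subgradient wherever finite, and $\min\sum_if_i$ is attained. Quantizer: $\Delta>0$; the scalar rounding quantizer is $Q(y)=t\Delta$ if $(t-\tfrac12)\Delta\le y<(t+\tfrac12)\Delta$, $t\in\mathbb{Z}$; for vectors it acts entrywise, and $w_{[Q]}=Q(w)$. $\rho>0$ is fixed. *)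

From HB Require Import structures.
From mathcomp Require Import all_boot all_order all_algebra.
Set Implicit Arguments. Unset Strict Implicit. Unset Printing Implicit Defensive.
Import Order.TTheory GRing.Theory Num.Theory.
Local Open Scope ring_scope.

Inductive ext (R : Type) := Fin of R | PInf.
Arguments PInf {R}.

Definition ele (R : numDomainType) (a b : ext R) : Prop :=
  match a, b with
  | Fin x, Fin y => x <= y
  | _, PInf => True
  | PInf, Fin _ => False
  end.

Definition eadd (R : numDomainType) (a b : ext R) : ext R :=
  match a, b with
  | Fin x, Fin y => Fin (x + y)
  | _, _ => PInf
  end.

Section Defs.
Variable R : archiRealFieldType.

Definition dotv (n : nat) (u v : 'cV[R]_n) : R := (u^T *m v) 0 0.
Definition sqnorm (n : nat) (v : 'cV[R]_n) : R := dotv v v.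

(* proper (never -oo by construction, finite somewhere) *)
Definition proper_fun (n : nat) (F : 'cV[R]_n -> ext R) : Prop :=
  exists x, F x <> PInf.

(* closed: the epigraph {(x,t) | F x <= t} is closed (its complement is open) *)
Definition closed_fun (n : nat) (F : 'cV[R]_n -> ext R) : Prop :=
  forall x t, ~ ele (F x) (Fin t) ->
    exists2 d : R, 0 < d & forall (y : 'cV[R]_n) (s : R),
      (forall k, `|y k 0 - x k 0| < d) -> `|s - t| < d -> ~ ele (F y) (Fin s).

(* convex (the inequality is trivial when one value is +oo) *)
Definition convex_fun (n : nat) (F : 'cV[R]_n -> ext R) : Prop :=
  forall x y a b th, F x = Fin a -> F y = Fin b -> 0 < th -> th < 1 ->
    ele (F (th *: x + (1 - th) *: y)) (Fin (th * a + (1 - th) * b)).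

(* g is a subgradient of F at x (empty subdifferential outside dom F) *)
Definition subgrad (n : nat) (F : 'cV[R]_n -> ext R) (x g : 'cV[R]_n) : Prop :=
  exists a, F x = Fin a /\ forall y, ele (Fin (a + dotv g (y - x))) (F y).

Definition assum1_fi (M : nat) (F : 'cV[R]_M -> ext R) : Prop :=
  [/\ proper_fun F, closed_fun F, convex_fun F &
      forall x, F x <> PInf -> exists g, subgrad F x g].

Definition fsum (N M : nat) (f : 'I_N -> 'cV[R]_M -> ext R)
    (x : 'cV[R]_(\sum_(i < N) M)) : ext R :=
  \big[@eadd R/Fin 0]_(i < N) f i (submxcol x i).

(* scalar rounding quantizer: Q y = t*Delta iff (t-1/2)Delta <= y < (t+1/2)Delta *)
Definition Qs (Delta y : R) : R :=
  (Num.floor (y / Delta + 2^-1))%:~R * Delta.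
Definition Qv (Delta : R) (m n : nat) (w : 'M[R]_(m, n)) : 'M[R]_(m, n) :=
  map_mx (Qs Delta) w.

Definition A1mx (N M E : nat) (arc : 'I_(2 * E) -> 'I_N * 'I_N)
  : 'M[R]_(\sum_(q < 2 * E) M, \sum_(i < N) M) :=
  mxblock (fun (q : 'I_(2 * E)) (i : 'I_N) =>
    if (arc q).1 == i then (1%:M : 'M[R]_M) else 0).
Definition A2mx (N M E : nat) (arc : 'I_(2 * E) -> 'I_N * 'I_N)
  : 'M[R]_(\sum_(q < 2 * E) M, \sum_(i < N) M) :=
  mxblock (fun (q : 'I_(2 * E)) (i : 'I_N) =>
    if (arc q).2 == i then (1%:M : 'M[R]_M) else 0).

Definition Mplus N M E arc := (A1mx M arc)^T + (@A2mx N M E arc)^T.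
Definition Mminus N M E arc := (A1mx M arc)^T - (@A2mx N M E arc)^T.
Definition Lplus N M E arc :=
  2^-1 *: (@Mplus N M E arc *m (Mplus M arc)^T).
Definition Lminus N M E arc :=
  2^-1 *: (@Mminus N M E arc *m (Mminus M arc)^T).

Definition Wmx (N M : nat) (e : rel 'I_N)
  : 'M[R]_(\sum_(i < N) M, \sum_(i < N) M) :=
  mxblock (fun (i j : 'I_N) =>
    if i == j then ((#|[set k | e i k]|)%:R%:M : 'M[R]_M) else 0).

Definition Amx N M E arc := col_mx (@A1mx N M E arc) (A2mx M arc).
Definition Bmx (M E : nat) : 'M[R]_(\sum_(q < 2 * E) M + \sum_(q < 2 * E) M,
                                    \sum_(q < 2 * E) M) :=
  col_mx (- 1%:M) (- 1%:M).

End Defs.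

(* The only genuinely analytic step is the x-update: a minimiser of a convex
   function plus a smooth quadratic satisfies the first-order condition, which
   one gets by comparing with the points x + t (y - x) and letting t -> 0.
   Everything else is block-matrix bookkeeping.  Since B = [-I; -I], the
   z-update averages the two halves of A x_Q, z = (A_1 + A_2) x_Q / 2, so the
   multiplier increments on the two halves are opposite and gamma = -beta
   propagates.  With this, A^T lambda = M_- beta, A^T A = 2W (every vertex is the
   tail and the head of exactly |N_i| arcs) and A^T B z = -L_+ x_Q, which turns
   the ADMM optimality condition into the QC-ADMM one; the beta-update reads
   beta' = beta + rho M_-^T x_Q / 2, giving the alpha-update. *)
From HB Require Import structures.
From mathcomp Require Import all_boot all_order all_algebra.
From mathcomp Require Import ring lra.
Set Implicit Arguments. Unset Strict Implicit. Unset Printing Implicit Defensive.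
Import Order.TTheory GRing.Theory Num.Theory.
Local Open Scope ring_scope.

Section InnerProduct.
Variable R : archiRealFieldType.

Lemma dotvE n (u v : 'cV[R]_n) : dotv u v = \sum_i u i 0 * v i 0.
Proof. by rewrite /dotv mxE; apply: eq_bigr => i _; rewrite mxE. Qed.

Lemma dotvDr n (u v w : 'cV[R]_n) : dotv u (v + w) = dotv u v + dotv u w.
Proof. by rewrite !dotvE -big_split; apply: eq_bigr => i _; rewrite mxE mulrDr. Qed.

Lemma dotvDl n (u v w : 'cV[R]_n) : dotv (v + w) u = dotv v u + dotv w u.
Proof. by rewrite !dotvE -big_split; apply: eq_bigr => i _; rewrite mxE mulrDl. Qed.

Lemma dotvZr n a (u v : 'cV[R]_n) : dotv u (a *: v) = a * dotv u v.
Proof. by rewrite !dotvE mulr_sumr; apply: eq_bigr => i _; rewrite mxE mulrCA. Qed.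

Lemma dotvZl n a (u v : 'cV[R]_n) : dotv (a *: v) u = a * dotv v u.
Proof. by rewrite !dotvE mulr_sumr; apply: eq_bigr => i _; rewrite mxE mulrA. Qed.

Lemma dotvNl n (u v : 'cV[R]_n) : dotv (- v) u = - dotv v u.
Proof. by rewrite -scaleN1r dotvZl mulN1r. Qed.

Lemma dotvC n (u v : 'cV[R]_n) : dotv u v = dotv v u.
Proof. by rewrite !dotvE; apply: eq_bigr => i _; rewrite mulrC. Qed.

Lemma dotv_trmx m n (A : 'M[R]_(m, n)) (w : 'cV[R]_m) (d : 'cV[R]_n) :
  dotv (A^T *m w) d = dotv w (A *m d).
Proof. by rewrite /dotv trmx_mul trmxK mulmxA. Qed.

Lemma sqnormD n (u v : 'cV[R]_n) :
  sqnorm (u + v) = sqnorm u + 2 * dotv u v + sqnorm v.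
Proof. by rewrite /sqnorm !dotvDr !dotvDl (dotvC v u); ring. Qed.

Lemma sqnormZ n a (v : 'cV[R]_n) : sqnorm (a *: v) = a ^+ 2 * sqnorm v.
Proof. by rewrite /sqnorm dotvZl dotvZr; ring. Qed.

End InnerProduct.

Lemma ge0_if_perturbed_ge0 (R : realFieldType) (D Q : R) :
  (forall t, 0 < t -> t < 1 -> 0 <= D + t * Q) -> 0 <= D.
Proof.
move=> H; rewrite leNgt; apply/negP => hD.
have hQ0 := normr_ge0 Q.
have hw : 0 < `|Q| - D by lra.
set t := - D / (2 * (`|Q| - D)).
have ht : t * (2 * (`|Q| - D)) = - D.
  by rewrite /t mulfVK // mulf_neq0 // gt_eqF.
have ht0 : 0 < t by rewrite /t divr_gt0 //; lra.
have ht1 : t < 1 by rewrite /t ltr_pdivrMr ?mulr_gt0 //; lra.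
have hQ : t * Q <= t * `|Q| by rewrite ler_pM2l // ler_norm.
have hDt : 0 < - D * t by rewrite mulr_gt0 //; lra.
have := H t ht0 ht1; lra.
Qed.

Section ConvexOptimality.
Variable R : archiRealFieldType.

Lemma eadd_eq_Fin (a b : ext R) c : eadd a b = Fin c ->
  exists a' b', [/\ a = Fin a', b = Fin b' & c = a' + b'].
Proof. by case: a => [a'|]; case: b => [b'|] //= [<-]; exists a', b'. Qed.

Lemma ele_eadd (a b : ext R) x y : ele a (Fin x) -> ele b (Fin y) ->
  ele (eadd a b) (Fin (x + y)).
Proof. by case: a => [a'|]; case: b => [b'|] //= h1 h2; apply: lerD. Qed.

Lemma convex_fsum N M (f : 'I_N -> 'cV[R]_M -> ext R) :
  (forall i, convex_fun (f i)) -> convex_fun (fsum f).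
Proof.
move=> hc x y a b th hx hy h0 h1; move: a b hx hy; rewrite /fsum.
apply: (big_ind3 (fun u v w => forall a b, v = Fin a -> w = Fin b ->
                   ele u (Fin (th * a + (1 - th) * b)))).
- by move=> a b [<-] [<-] /=; rewrite !mulr0 addr0.
- move=> u1 v1 w1 u2 v2 w2 H1 H2 a b /eadd_eq_Fin [a1 [a2 [e1 e2 ->]]]
    /eadd_eq_Fin [b1 [b2 [e3 e4 ->]]].
  have := ele_eadd (H1 _ _ e1 e3) (H2 _ _ e2 e4).
  by congr ele; congr Fin; ring.
- move=> i _ a b ha hb.
  have -> : submxcol (th *: x + (1 - th) *: y) i =
     th *: submxcol x i + (1 - th) *: submxcol y i.
    by apply/matrixP => p q; rewrite !mxE.
  exact: hc.
Qed.

Lemma subgrad_of_augmented_min n p (F : 'cV[R]_n -> ext R) (A : 'M[R]_(p, n))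
    (c l : 'cV[R]_p) (rho : R) x :
  convex_fun F -> F x <> PInf ->
  (forall y, ele (eadd (F x) (Fin (dotv l (A *m x + c) + rho / 2 * sqnorm (A *m x + c))))
                 (eadd (F y) (Fin (dotv l (A *m y + c) + rho / 2 * sqnorm (A *m y + c))))) ->
  subgrad F x (- (A^T *m l + rho *: (A^T *m (A *m x + c)))).
Proof.
move=> hc hfin hmin; case hFx: (F x) hfin => [a|] // _.
exists a; split=> // y; case hFy: (F y) => [b|] //=.
set d := y - x; set u := A *m x + c; set v := A *m d.
rewrite dotvNl dotvDl dotvZl !dotv_trmx -/u.
suff : 0 <= b - a + (dotv l v + rho * dotv u v) by lra.
apply: ge0_if_perturbed_ge0 (rho / 2 * sqnorm v) _ => t ht0 ht1.
have := hc y x b a t hFy hFx ht0 ht1.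
have -> : t *: y + (1 - t) *: x = x + t *: d.
  by apply/matrixP => i j; rewrite /d !mxE; ring.
have hAxt : A *m (x + t *: d) + c = u + t *: v.
  by rewrite mulmxDr -scalemxAr /u /v addrAC.
have := hmin (x + t *: d); rewrite hFx hAxt.
case: (F (x + t *: d)) => [c'|] //=.
rewrite (dotvDr l u) dotvZr (sqnormD u) sqnormZ dotvZr => hm hcv.
have hq : 0 <= t * ((b - a + (dotv l v + rho * dotv u v)) + t * (rho / 2 * sqnorm v)).
  by nra.
by rewrite pmulr_rge0 in hq.
Qed.

End ConvexOptimality.

Section SelectorMatrix.
Variables (R : nzRingType) (K N M : nat).

Definition selmx (sel : 'I_K -> 'I_N) : 'M[R]_(\sum_(q < K) M, \sum_(i < N) M) :=
  mxblock (fun q i => if sel q == i then (1%:M : 'M[R]_M) else 0).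

Lemma selmx_gram (sel : 'I_K -> 'I_N) :
  (selmx sel)^T *m selmx sel =
  mxblock (fun i j => if i == j then ((#|[set q | sel q == i]|)%:R%:M : 'M[R]_M) else 0).
Proof.
rewrite tr_mxblock mul_mxblock; apply: eq_mxblock => i j.
case: eqP => [<-|hij].
  rewrite (eq_bigr (fun q => if sel q == i then (1%:M : 'M[R]_M) else 0)); last first.
    by move=> q _; case: eqP => _; rewrite ?trmx1 ?trmx0 ?mul1mx ?mul0mx.
  rewrite -big_mkcond /= sumr_const -scaler_nat -scalemx1 scale1r scalemx1.
  by congr (_ %:R %:M); apply: eq_card => q; rewrite inE.
rewrite big1 // => q _.
case: eqP => hi; case: eqP => hj; rewrite ?trmx0 ?mul0mx ?mulmx0 //.
by case: hij; rewrite -hi -hj.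
Qed.

End SelectorMatrix.

Lemma card_arcs_from N E (e : rel 'I_N) (arc : 'I_(2 * E) -> 'I_N * 'I_N) i :
  injective arc -> (forall q, e (arc q).1 (arc q).2) ->
  (forall i j, e i j -> exists q, arc q = (i, j)) ->
  #|[set q | (arc q).1 == i]| = #|[set k | e i k]|.
Proof.
move=> arc_inj arc_edge arc_onto.
have -> : [set k | e i k] = [set (arc q).2 | q in [set q | (arc q).1 == i]].
  apply/setP => k; rewrite inE; apply/idP/imsetP.
    by move=> /arc_onto [q hq]; exists q; rewrite ?inE hq.
  by move=> [q]; rewrite inE => /eqP hq ->; have := arc_edge q; rewrite hq.
rewrite card_in_imset // => q1 q2; rewrite !inE => /eqP h1 /eqP h2 h.
by apply: arc_inj; move: h1 h2 h; case: (arc q1); case: (arc q2) => /= ? ? ? ? -> -> ->.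
Qed.

Lemma card_arcs_to N E (e : rel 'I_N) (arc : 'I_(2 * E) -> 'I_N * 'I_N) i :
  symmetric e -> injective arc -> (forall q, e (arc q).1 (arc q).2) ->
  (forall i j, e i j -> exists q, arc q = (i, j)) ->
  #|[set q | (arc q).2 == i]| = #|[set k | e i k]|.
Proof.
move=> e_sym arc_inj arc_edge arc_onto.
pose rev_arc q := ((arc q).2, (arc q).1).
apply: (@card_arcs_from _ _ e rev_arc) => [q1 q2 [h2 h1]|q|j k].
- by apply: arc_inj; move: h1 h2; case: (arc q1); case: (arc q2) => /= ? ? ? ? -> ->.
- by rewrite /rev_arc /= e_sym.
- by rewrite e_sym => /arc_onto [q hq]; exists q; rewrite /rev_arc hq.
Qed.

Lemma incidence_gram (R : archiRealFieldType) N M E (e : rel 'I_N)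
    (arc : 'I_(2 * E) -> 'I_N * 'I_N) :
  symmetric e -> injective arc -> (forall q, e (arc q).1 (arc q).2) ->
  (forall i j, e i j -> exists q, arc q = (i, j)) ->
  (A1mx R M arc)^T *m A1mx R M arc + (A2mx R M arc)^T *m A2mx R M arc = 2 *: Wmx R M e.
Proof.
move=> e_sym arc_inj arc_edge arc_onto.
(* A1mx and A2mx are, by definition, selmx of the tail and head maps of arc. *)
rewrite (@selmx_gram R _ _ M (fun q => (arc q).1)) (@selmx_gram R _ _ M (fun q => (arc q).2)).
rewrite scaler_nat mulr2n /Wmx; congr (_ + _); apply: eq_mxblock => i j;
  case: eqP => // _.
  by rewrite (card_arcs_from _ arc_inj arc_edge arc_onto).
by rewrite (card_arcs_to _ e_sym arc_inj arc_edge arc_onto).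
Qed.

Section AdmmBlocks.
Variables (R : numFieldType) (S n : nat) (A1 A2 : 'M[R]_(S, n)) (rho : R).
Let A := col_mx A1 A2.
Let B : 'M[R]_(S + S, S) := col_mx (- 1%:M) (- 1%:M).

Lemma trmx_trD : (A1^T + A2^T)^T = A1 + A2.
Proof. by apply/matrixP => i j; rewrite !mxE. Qed.

Lemma trmx_trB : (A1^T - A2^T)^T = A1 - A2.
Proof. by apply/matrixP => i j; rewrite !mxE. Qed.

Lemma mul_negI_col (v : 'cV[R]_S) : B *m v = col_mx (- v) (- v).
Proof. by rewrite mul_col_mx mulNmx mul1mx. Qed.

Lemma mul_tr_negI_col (w : 'cV[R]_(S + S)) : B^T *m w = - usubmx w - dsubmx w.
Proof.
rewrite -[w]vsubmxK tr_col_mx mul_row_col !col_mxKu !col_mxKd.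
by rewrite !linearN /= trmx1 !mulNmx !mul1mx.
Qed.

Lemma mul_tr_col_mx (w : 'cV[R]_(S + S)) : A^T *m w = A1^T *m usubmx w + A2^T *m dsubmx w.
Proof. by rewrite -{1}[w]vsubmxK tr_col_mx mul_row_col. Qed.

Lemma admm_z_step (lam : 'cV[R]_(S + S)) u z : rho != 0 ->
  dsubmx lam = - usubmx lam ->
  B^T *m lam + rho *: (B^T *m (A *m u + B *m z)) = 0 ->
  z = 2^-1 *: ((A1^T + A2^T)^T *m u).
Proof.
move=> hr hlam; rewrite !mul_tr_negI_col mul_negI_col mul_col_mx add_col_mx col_mxKu col_mxKd.
rewrite trmx_trD hlam mulmxDl => /matrixP h; apply/matrixP => i j.
have := h i j; rewrite !mxE => /eqP.
have -> : forall a b c d : R, - a - - a + rho * (- (b + - c) - (d + - c)) =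
  rho * (2 * c - (b + d)) by move=> *; ring.
rewrite mulf_eq0 (negbTE hr) subr_eq0 /= => /eqP <-.
by rewrite mulrA mulVf ?mul1r // pnatr_eq0.
Qed.

Lemma admm_lam_step_blocks (lam : 'cV[R]_(S + S)) u z :
  lam + rho *: (A *m u + B *m z) =
  col_mx (usubmx lam + rho *: (A1 *m u - z)) (dsubmx lam + rho *: (A2 *m u - z)).
Proof. by rewrite mul_negI_col mul_col_mx add_col_mx scale_col_mx -{1}[lam]vsubmxK add_col_mx. Qed.

Lemma admm_lam_step_antisym (lam : 'cV[R]_(S + S)) u :
  dsubmx lam = - usubmx lam ->
  let lam' := lam + rho *: (A *m u + B *m (2^-1 *: ((A1^T + A2^T)^T *m u))) in
  dsubmx lam' = - usubmx lam'.
Proof.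
move=> hlam /=; rewrite admm_lam_step_blocks col_mxKu col_mxKd hlam.
rewrite trmx_trD mulmxDl.
by apply/matrixP => i j; rewrite !mxE; field.
Qed.

Lemma admm_lam_step_alpha (lam : 'cV[R]_(S + S)) u :
  (A1^T - A2^T) *m usubmx (lam + rho *: (A *m u + B *m (2^-1 *: ((A1^T + A2^T)^T *m u))))
  = (A1^T - A2^T) *m usubmx lam
    + rho *: ((2^-1 *: ((A1^T - A2^T) *m (A1^T - A2^T)^T)) *m u).
Proof.
rewrite admm_lam_step_blocks col_mxKu mulmxDr; congr (_ + _).
rewrite trmx_trD trmx_trB (mulmxDl A1).
have -> : A1 *m u - 2^-1 *: (A1 *m u + A2 *m u) = 2^-1 *: (A1 *m u - A2 *m u).
  by apply/matrixP => i j; rewrite !mxE; field.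
by rewrite -scalemxAl -mulmxA -mulmxBl (mulmxBl A1 A2 u) !scalemxAr.
Qed.

Lemma admm_augmented_grad (lam : 'cV[R]_(S + S)) x xq :
  dsubmx lam = - usubmx lam ->
  A^T *m lam + rho *: (A^T *m (A *m x + B *m (2^-1 *: ((A1^T + A2^T)^T *m xq))))
  = rho *: ((A1^T *m A1 + A2^T *m A2) *m x) + (A1^T - A2^T) *m usubmx lam
    - rho *: ((2^-1 *: ((A1^T + A2^T) *m (A1^T + A2^T)^T)) *m xq).
Proof.
move=> hlam; rewrite !mul_tr_col_mx hlam mul_negI_col mul_col_mx add_col_mx col_mxKu col_mxKd.
set z := 2^-1 *: _.
have -> : A1^T *m usubmx lam + A2^T *m - usubmx lam = (A1^T - A2^T) *m usubmx lam.
  by rewrite mulmxN mulmxBl.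
have -> : A1^T *m (A1 *m x - z) + A2^T *m (A2 *m x - z)
          = (A1^T *m A1 + A2^T *m A2) *m x - (A1^T + A2^T) *m z.
  by rewrite !mulmxBr !mulmxA mulmxDl mulmxDl opprD addrACA.
rewrite /z -scalemxAr -scalemxAl mulmxA.
move: (_ *m x) (_ *m usubmx lam) (_ *m xq) => P L Z.
by apply/matrixP => i j; rewrite !mxE; ring.
Qed.

End AdmmBlocks.

Theorem mainTheorem3 (R : archiRealFieldType) (N M E : nat)
  (e : rel 'I_N) (arc : 'I_(2 * E) -> 'I_N * 'I_N)
  (f : 'I_N -> 'cV[R]_M -> ext R) (Delta rho : R)
  (x : nat -> 'cV[R]_(\sum_(i < N) M))
  (z : nat -> 'cV[R]_(\sum_(q < 2 * E) M))
  (lam : nat -> 'cV[R]_(\sum_(q < 2 * E) M + \sum_(q < 2 * E) M)) :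
  (2 <= N)%N -> (1 <= M)%N ->
  symmetric e -> irreflexive e -> (forall i j, connect e i j) ->
  injective arc -> (forall q, e (arc q).1 (arc q).2) ->
  (forall i j, e i j -> exists q, arc q = (i, j)) ->
  (forall i, assum1_fi (f i)) ->
  (exists xs v, fsum f xs = Fin v /\ forall y, ele (Fin v) (fsum f y)) ->
  0 < Delta -> 0 < rho ->
  z 0%N = 2^-1 *: ((Mplus R M arc)^T *m Qv Delta (x 0%N)) ->
  dsubmx (lam 0%N) = - usubmx (lam 0%N) ->
  (forall k y,
     ele (eadd (fsum f (x k.+1))
               (Fin (dotv (lam k) (Amx R M arc *m x k.+1 + Bmx R M E *m z k)
                     + rho / 2 * sqnorm (Amx R M arc *m x k.+1 + Bmx R M E *m z k))))
         (eadd (fsum f y)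
               (Fin (dotv (lam k) (Amx R M arc *m y + Bmx R M E *m z k)
                     + rho / 2 * sqnorm (Amx R M arc *m y + Bmx R M E *m z k))))) ->
  (forall k, (Bmx R M E)^T *m lam k
             + rho *: ((Bmx R M E)^T *m (Amx R M arc *m Qv Delta (x k.+1)
                                         + Bmx R M E *m z k.+1)) = 0) ->
  (forall k, lam k.+1 = lam k + rho *: (Amx R M arc *m Qv Delta (x k.+1)
                                        + Bmx R M E *m z k.+1)) ->
  forall k,
    [/\ dsubmx (lam k) = - usubmx (lam k),
        z k = 2^-1 *: ((Mplus R M arc)^T *m Qv Delta (x k)),
        subgrad (fsum f) (x k.+1)
          (- (2 * rho *: (Wmx R M e *m x k.+1) + Mminus R M arc *m usubmx (lam k)
              - rho *: (Lplus R M arc *m Qv Delta (x k))))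
      & Mminus R M arc *m usubmx (lam k.+1)
        = Mminus R M arc *m usubmx (lam k) + rho *: (Lminus R M arc *m Qv Delta (x k.+1))].
Proof.
move=> _ _ e_sym _ _ arc_inj arc_edge arc_onto hf [xs [v [hxs _]]] _ rho_gt0
  hz0 hlam0 hmin hzeq hlam.
have rho_neq0 : rho != 0 by rewrite gt_eqF.
have z_next k : dsubmx (lam k) = - usubmx (lam k) ->
    z k.+1 = 2^-1 *: ((Mplus R M arc)^T *m Qv Delta (x k.+1)).
  by move=> hg; apply: (admm_z_step rho_neq0 hg (hzeq k)).
have invariant k : dsubmx (lam k) = - usubmx (lam k) /\
    z k = 2^-1 *: ((Mplus R M arc)^T *m Qv Delta (x k)).
  elim: k => [//|k [hg _]]; split; last exact: z_next.
  by rewrite hlam (z_next k hg); apply: admm_lam_step_antisym.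
move=> k; have [hg hz] := invariant k; split=> //.
- have hconv : convex_fun (fsum f) by apply: convex_fsum => i; case: (hf i).
  have hfin : fsum f (x k.+1) <> PInf by move=> hP; have := hmin k xs; rewrite hP hxs.
  have := subgrad_of_augmented_min hconv hfin (hmin k).
  rewrite hz admm_augmented_grad // (incidence_gram R M e_sym arc_inj arc_edge arc_onto).
  have -> : rho *: (2 *: Wmx R M e *m x k.+1) = 2 * rho *: (Wmx R M e *m x k.+1).
    by rewrite -scalemxAl scalerA mulrC.
  by apply.
- by rewrite hlam (z_next k hg); apply: admm_lam_step_alpha.
Qed.
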